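(* Let $X$ be a nonempty set. The monoid $FT^1(X)$ is an idempotent generated regular monoid. Moreover, if $u=g_0g_1\cdots g_n\in\Gamma(X)^+$ (with $g_j\in\Gamma(X)$) is such that there exists $k$ with $0<k<n$, $g_{j-1}\in\{g_j^l,g_j^r\}$ for all $1\le j\le k$, and $g_j\in\{g_{j-1}^l,g_{j-1}^r\}$ for all $k<j\le n$, then $[g_ng_{n-1}\cdots g_0]$ is an inverse of $[u]$ in $FT^1(X)$.
   Context: Let $1$ be a symbol not in $X$. Elements of height $\ge 2$ are triples $g=(g^l,g^c,g^r)$; $\Gamma_0(X)=\{1\}$, $\Gamma_1(X)=X$, each $x\in X$ identified with the triple $(1,x,1)$ (so $x^l=x^r=1$); for $i\ge 2$, $\Gamma_i(X)$ is the set of triples $g\in\Gamma_{i-1}(X)\times\Gamma_{i-2}(X)\times\Gamma_{i-1}(X)$ with $g^l\neq g^r$ and $g^c\in\{(g^l)^l,(g^l)^r\}\cap\{(g^r)^l,(g^r)^r\}$; $\Gamma(X)=\bigcup_{i\ge0}\Gamma_i(X)$. Let $\rho$ be the smallest congruence on $\Gamma(X)^+$ containing $(1g,g),(g1,g),(gg,g)$ for all $g\in\Gamma(X)$ and $(g^cg^lg,g)$, $(gg^rg^c,g)$, $(g^rg^cgg^cg^l,g^rg^cg^l)$ for all $g\in\Gamma_i(X)$, $i\ge2$. $FT^1(X)=\Gamma(X)^+/\rho$ and $[u]$ is the class of $u$. An inverse of $a$ is $b$ with $aba=a$, $bab=b$. *)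

From Stdlib Require Import List.
Import ListNotations.
Set Implicit Arguments.

Inductive gterm (X : Type) : Type :=
| G1 : gterm X
| Gx : X -> gterm X
| Gt : gterm X -> gterm X -> gterm X -> gterm X.
Arguments G1 {X}.

(* g^l and g^r; each x in X is the triple (1,x,1).  (The value on 1 is
   irrelevant: it is never used.) *)
Definition gl {X} (g : gterm X) : gterm X :=
  match g with G1 => G1 | Gx _ => G1 | Gt l _ _ => l end.
Definition gr {X} (g : gterm X) : gterm X :=
  match g with G1 => G1 | Gx _ => G1 | Gt _ _ r => r end.
Definition gc {X} (g : gterm X) : gterm X :=
  match g with G1 => G1 | Gx x => Gx x | Gt _ c _ => c end.

Inductive Gamma_i {X : Type} : nat -> gterm X -> Prop :=
| Gam0 : Gamma_i 0 G1
| Gam1 : forall x, Gamma_i 1 (Gx x)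
| GamS : forall i l c r,
    Gamma_i (S i) l -> Gamma_i i c -> Gamma_i (S i) r ->
    l <> r ->
    (c = gl l \/ c = gr l) -> (c = gl r \/ c = gr r) ->
    Gamma_i (S (S i)) (Gt l c r).

Definition Gamma {X : Type} (g : gterm X) : Prop := exists i, Gamma_i i g.

Definition isWord {X : Type} (u : list (gterm X)) : Prop :=
  u <> [] /\ Forall Gamma u.

Inductive rho {X : Type} : list (gterm X) -> list (gterm X) -> Prop :=
| rho_refl : forall u, isWord u -> rho u u
| rho_sym : forall u v, rho u v -> rho v u
| rho_trans : forall u v w, rho u v -> rho v w -> rho u w
| rho_multl : forall w u v, isWord w -> rho u v -> rho (w ++ u) (w ++ v)
| rho_multr : forall w u v, isWord w -> rho u v -> rho (u ++ w) (v ++ w)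
| rho_1l : forall g, Gamma g -> rho [G1; g] [g]
| rho_1r : forall g, Gamma g -> rho [g; G1] [g]
| rho_idem : forall g, Gamma g -> rho [g; g] [g]
| rho_cl : forall i g, 2 <= i -> Gamma_i i g -> rho [gc g; gl g; g] [g]
| rho_rc : forall i g, 2 <= i -> Gamma_i i g -> rho [g; gr g; gc g] [g]
| rho_long : forall i g, 2 <= i -> Gamma_i i g ->
    rho [gr g; gc g; g; gc g; gl g] [gr g; gc g; gl g].

(* Elements of FT^1(X) are rho-classes [u] of words u; multiplication is
   [u][v] = [u ++ v], and [u] = [v] iff rho u v. *)

Definition idempotent_word {X : Type} (e : list (gterm X)) : Prop :=
  isWord e /\ rho (e ++ e) e.

Definition inverse_word {X : Type} (a b : list (gterm X)) : Prop :=
  isWord a /\ isWord b /\ rho (a ++ b ++ a) a /\ rho (b ++ a ++ b) b.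

From Stdlib Require Import List Lia Classical.
Import ListNotations.

(* Every generator g satisfies g g ρ g, so FT^1(X) is idempotent generated.
   Call a word a_m ⋯ a_1 P b_1 ⋯ b_n a peak word if each letter is a child
   (an l- or r-component) of its neighbour towards P.  Since p q p ρ p whenever
   q is a child of p, the word P b_1 ⋯ b_n b_n ⋯ b_1 P collapses to P, so a peak
   word is inverse to its reverse; this is the explicit inverse.  For
   regularity, every word is ρ-equivalent to a peak word.  Letters are appended
   one at a time, joining the last letter m to the new letter h through 1 by the
   chains m m^r m^c ⋯ 1 ρ m and 1 ⋯ h^c h^l h ρ h.  A valley d e q, with e a
   common child of d and q, either collapses or is filled by the apex
   (q, e, d) of Γ(X) through r c l ρ r (l, c, r) l, which moves the valley one
   letter closer to the peak. *)

Section ListFacts.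
Context {A : Type}.

Lemma skipn_nth_cons n l (z : A) : n < length l -> skipn n l = nth n l z :: skipn (S n) l.
Proof. revert l; induction n; intros [|x l] H; simpl in *; try lia; auto with arith. Qed.

Lemma firstn_S_nth n l (z : A) : n < length l -> firstn (S n) l = firstn n l ++ [nth n l z].
Proof.
  revert l; induction n; intros [|x l] H; simpl in *; try lia; [reflexivity |].
  f_equal; apply IHn; lia.
Qed.

Lemma last_app_last u v (z : A) : last (u ++ v) z = last (last u z :: v) z.
Proof.
  destruct v as [|x v _] using rev_ind; [now rewrite app_nil_r |].
  now rewrite app_assoc, app_comm_cons, !last_last.
Qed.

End ListFacts.

Section FT1.
Set Implicit Arguments.
Context {X : Type}.
Implicit Types (g p q d e h P : gterm X) (u v w a b L : list (gterm X)).

Fixpoint height g : nat :=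
  match g with G1 => 0 | Gx _ => 1 | Gt l _ _ => S (height l) end.

Lemma Gamma_i_height i g : Gamma_i i g -> height g = i.
Proof. induction 1; simpl; auto. Qed.

Definition child q p : Prop := q = gl p \/ q = gr p.

Lemma Gamma_G1 : Gamma (@G1 X).
Proof. exists 0; constructor. Qed.

Lemma Gamma_Gx x : Gamma (@Gx X x).
Proof. exists 1; constructor. Qed.

Hint Resolve Gamma_G1 Gamma_Gx : core.

Ltac Forall_Gamma :=
  repeat first [ apply Forall_nil | apply Forall_cons | apply Forall_app; split
               | apply Forall_rev ]; auto.

Lemma child_G1 q : child q G1 -> q = G1.
Proof. intros [-> | ->]; reflexivity. Qed.

Lemma Gamma_i_child i p q : Gamma_i i p -> p <> G1 -> child q p ->
  exists j, i = S j /\ Gamma_i j q.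
Proof.
  intros Hp Hp1 [-> | ->]; destruct Hp; try congruence; simpl.
  all: eexists; split; [reflexivity | eauto using Gamma_i].
Qed.

Lemma Gamma_child p q : Gamma p -> child q p -> Gamma q.
Proof.
  intros [i Hp] Hq.
  destruct (classic (p = G1)) as [-> | Hp1].
  - rewrite (child_G1 Hq); auto.
  - destruct (Gamma_i_child Hp Hp1 Hq) as (j & _ & Hj); now exists j.
Qed.

Lemma Gamma_apex d e q : Gamma d -> Gamma q -> d <> G1 -> q <> G1 -> q <> d ->
  child e d -> child e q -> Gamma (Gt q e d).
Proof.
  intros [i Hd] [i' Hq] Hd1 Hq1 Hqd Hed Heq.
  destruct (Gamma_i_child Hd Hd1 Hed) as (j & -> & Hj).
  destruct (Gamma_i_child Hq Hq1 Heq) as (j' & -> & Hj').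
  assert (j' = j) as ->
    by now rewrite <- (Gamma_i_height Hj), <- (Gamma_i_height Hj').
  exists (S (S j)); constructor; auto.
Qed.

Lemma Gamma_i_parts i g : 2 <= i -> Gamma_i i g ->
  Gamma g /\ Gamma (gl g) /\ Gamma (gc g) /\ Gamma (gr g).
Proof.
  intros Hi Hg; destruct Hg as [| |i l c r Hl Hc Hr]; try lia; simpl.
  repeat split; eexists; eauto using Gamma_i.
Qed.

Lemma rho_isWord u v : rho u v -> isWord u /\ isWord v.
Proof.
  assert (Happ : forall u v, isWord u -> isWord v -> isWord (u ++ v)).
  { intros u' v' [Hu Fu] [_ Fv]; split; [now destruct u' | now apply Forall_app]. }
  induction 1 as [| | | ? ? ? ? _ ? | ? ? ? ? _ ? | g Gg | g Gg | g Gg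
                  | i g Hi Hg | i g Hi Hg | i g Hi Hg]; try tauto.
  1, 2: split; apply Happ; tauto.
  4-6: destruct (Gamma_i_parts Hi Hg) as (? & ? & ? & ?).
  all: split; (split; [discriminate | Forall_Gamma]).
Qed.

Lemma rho_ctx l1 l2 u v : rho u v -> Forall Gamma l1 -> Forall Gamma l2 ->
  rho (l1 ++ u ++ l2) (l1 ++ v ++ l2).
Proof.
  intros H F1 F2.
  assert (H' : rho (u ++ l2) (v ++ l2)).
  { destruct l2; [now rewrite !app_nil_r | apply rho_multr; auto].
    split; [discriminate | exact F2]. }
  destruct l1; [exact H' | apply rho_multl; auto].
  split; [discriminate | exact F1].
Qed.
Arguments rho_ctx l1 l2 {u v}.

Lemma rho_app u u' v v' : rho u u' -> rho v v' -> rho (u ++ v) (u' ++ v').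
Proof.
  intros Hu Hv.
  destruct (rho_isWord Hu) as [_ [_ Fu']], (rho_isWord Hv) as [[_ Fv] _].
  apply rho_trans with (u' ++ v).
  - now apply (rho_ctx [] v Hu).
  - pose proof (rho_ctx u' [] Hv Fu' (Forall_nil _)) as H.
    now rewrite !app_nil_r in H.
Qed.

Lemma rho_snoc u u' g : rho u u' -> Gamma g -> rho (u ++ [g]) (u' ++ [g]).
Proof. intros H Gg; apply rho_multr; [split; [discriminate | Forall_Gamma] | exact H]. Qed.

Lemma rho_ctx_eq l1 l2 u v w : rho u v -> Forall Gamma l1 -> Forall Gamma l2 ->
  w = l1 ++ u ++ l2 -> rho w (l1 ++ v ++ l2).
Proof. intros H F1 F2 ->; exact (rho_ctx l1 l2 H F1 F2). Qed.
Arguments rho_ctx_eq l1 l2 {u v w}.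

Ltac list_eq := simpl; repeat (rewrite <- app_assoc; simpl); rewrite ?app_nil_r; reflexivity.

Tactic Notation "rho_rw" uconstr(l1) uconstr(l2) uconstr(H) :=
  eapply rho_trans;
  [refine (rho_ctx_eq l1 l2 H _ _ _); [Forall_Gamma | Forall_Gamma | list_eq] | cbn [app]].
Tactic Notation "rho_rw_back" uconstr(l1) uconstr(l2) uconstr(H) :=
  rho_rw l1 l2 (rho_sym H).

Section Triple.
Variables l c r : gterm X.
Hypothesis Gp : Gamma (Gt l c r).

Let Gi : exists i, 2 <= i /\ Gamma_i i (Gt l c r).
Proof. destruct Gp as [i Hi]; exists i; split; [inversion Hi; lia | exact Hi]. Qed.

Lemma Gamma_triple_parts : Gamma l /\ Gamma c /\ Gamma r.
Proof. destruct Gi as (i & Hi & Hg); now destruct (Gamma_i_parts Hi Hg) as (_ & ? & ? & ?). Qed.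

Lemma rho_triple_cl : rho [c; l; Gt l c r] [Gt l c r].
Proof. destruct Gi as (i & Hi & Hg); exact (rho_cl Hi Hg). Qed.

Lemma rho_triple_rc : rho [Gt l c r; r; c] [Gt l c r].
Proof. destruct Gi as (i & Hi & Hg); exact (rho_rc Hi Hg). Qed.

Lemma rho_triple_long : rho [r; c; Gt l c r; c; l] [r; c; l].
Proof. destruct Gi as (i & Hi & Hg); exact (rho_long Hi Hg). Qed.

Lemma rho_triple_loop : rho [Gt l c r; r; c; l; Gt l c r] [Gt l c r].
Proof.
  destruct Gamma_triple_parts as (Gl & Gc & Gr).
  set (p := Gt l c r) in *.
  rho_rw_back [p] [p] rho_triple_long.
  rho_rw [] [p; c; l; p] rho_triple_rc.
  rho_rw [p; p] [] rho_triple_cl.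
  rho_rw [] [p] (rho_idem Gp).
  exact (rho_idem Gp).
Qed.

Lemma rho_insert_apex : rho [r; c; l] [r; Gt l c r; l].
Proof.
  destruct Gamma_triple_parts as (Gl & Gc & Gr).
  set (p := Gt l c r) in *.
  apply rho_sym.
  rho_rw_back [r] [l] rho_triple_cl.
  rho_rw_back [r] [l; p; l] (rho_idem Gc).
  rho_rw [r; c] [l] rho_triple_cl.
  rho_rw_back [r; c] [l] rho_triple_rc.
  rho_rw_back [r; c; p; r] [l] (rho_idem Gc).
  rho_rw [r; c] [c; l] rho_triple_rc.
  exact rho_triple_long.
Qed.

End Triple.

Lemma rho_child_sandwich p q : Gamma p -> child q p -> rho [p; q; p] [p].
Proof.
  intros Gp Hq; pose proof Gp as [i Hp].
  destruct Hp as [| x | i l c r].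
  - rewrite (child_G1 Hq).
    rho_rw [] [G1] (rho_idem Gamma_G1).
    exact (rho_idem Gamma_G1).
  - destruct Hq as [-> | ->]; simpl;
      rho_rw [Gx x] [] (rho_1l Gp); exact (rho_idem Gp).
  - destruct (Gamma_triple_parts Gp) as (Gl & Gc & Gr).
    destruct Hq as [-> | ->]; simpl.
    + rho_rw_back [] [l; Gt l c r] (rho_triple_rc Gp).
      exact (rho_triple_loop Gp).
    + rho_rw_back [Gt l c r; r] [] (rho_triple_cl Gp).
      exact (rho_triple_loop Gp).
Qed.

Inductive descent : gterm X -> list (gterm X) -> Prop :=
| descent_nil p : descent p []
| descent_cons p q b : Gamma p -> child q p -> descent q b -> descent p (q :: b).

Lemma descent_Forall_Gamma p b : Gamma p -> descent p b -> Forall Gamma b.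
Proof.
  intros Gp Hb; induction Hb as [|p q b _ Hq _ IH]; constructor;
    [| apply IH]; eapply Gamma_child; eauto.
Qed.

Lemma descent_app_iff p b b' :
  descent p (b ++ b') <-> descent p b /\ descent (last (p :: b) G1) b'.
Proof.
  revert p; induction b as [|q b IH]; intro p; simpl.
  - split; [split; [constructor | assumption] | tauto].
  - split.
    + intro H; inversion_clear H as [| ? ? ? Gp Hq Hbd].
      apply IH in Hbd as [Hb Hd]; split; [constructor |]; assumption.
    + intros [Hb Hd]; inversion_clear Hb as [| ? ? ? Gp Hq Hb'].
      constructor; try apply IH; auto.
Qed.

Lemma rho_palindrome p b : Gamma p -> descent p b -> rho (p :: b ++ rev b ++ [p]) [p].
Proof.
  intros Gp Hb; induction Hb as [p | p q b _ Hq Hb IH]; [exact (rho_idem Gp) |].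
  assert (Gq : Gamma q) by exact (Gamma_child Gp Hq).
  pose proof (descent_Forall_Gamma Gq Hb).
  rho_rw [p] [p] (IH Gq).
  exact (rho_child_sandwich Gp Hq).
Qed.

Definition peak_word P a b : list (gterm X) := rev a ++ P :: b.

Definition is_peak_word L : Prop :=
  exists P a b, Gamma P /\ descent P a /\ descent P b /\ L = peak_word P a b.

Lemma peak_word_isWord P a b : Gamma P -> descent P a -> descent P b ->
  isWord (peak_word P a b).
Proof.
  intros GP Ha Hb; unfold peak_word; split; [now destruct (rev a) |].
  pose proof (descent_Forall_Gamma GP Ha); pose proof (descent_Forall_Gamma GP Hb).
  Forall_Gamma.
Qed.

Lemma is_peak_word_isWord L : is_peak_word L -> isWord L.
Proof. intros (P & a & b & GP & Ha & Hb & ->); exact (peak_word_isWord GP Ha Hb). Qed.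

Lemma rev_peak_word P a b : rev (peak_word P a b) = peak_word P b a.
Proof.
  unfold peak_word; rewrite rev_app_distr, rev_involutive; list_eq.
Qed.

Lemma last_peak_word P a b : last (peak_word P a b) G1 = last (P :: b) G1.
Proof. unfold peak_word; now rewrite last_app_last. Qed.

Lemma peak_word_inverse P a b : Gamma P -> descent P a -> descent P b ->
  inverse_word (peak_word P a b) (peak_word P b a).
Proof.
  assert (Hsandwich : forall a b, Gamma P -> descent P a -> descent P b ->
    rho (peak_word P a b ++ peak_word P b a ++ peak_word P a b) (peak_word P a b)).
  { clear a b; intros a b GP Ha Hb.
    pose proof (descent_Forall_Gamma GP Ha); pose proof (descent_Forall_Gamma GP Hb).
    unfold peak_word.
    rho_rw (rev a) (a ++ rev a ++ P :: b) (rho_palindrome GP Hb).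
    rho_rw (rev a) b (rho_palindrome GP Ha).
    apply rho_refl, (peak_word_isWord GP Ha Hb). }
  intros GP Ha Hb; split; [|split; [|split]]; auto using peak_word_isWord.
Qed.

Lemma rho_ctx_last L u v : isWord L ->
  rho (last L G1 :: u) (last L G1 :: v) -> rho (L ++ u) (L ++ v).
Proof.
  intros [HL FL] H.
  rewrite (app_removelast_last G1 HL) in FL |- *.
  apply Forall_app in FL as [FL _].
  rewrite <- !app_assoc.
  pose proof (rho_ctx (removelast L) [] H FL (Forall_nil _)) as H'.
  now rewrite !app_nil_r in H'.
Qed.

Lemma is_peak_word_app_descent L b : is_peak_word L -> descent (last L G1) b ->
  is_peak_word (L ++ b).
Proof.
  intros (P & a & b0 & GP & Ha & Hb0 & ->) Hb; rewrite last_peak_word in Hb.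
  exists P, a, (b0 ++ b); repeat split; auto.
  - now apply descent_app_iff.
  - unfold peak_word; list_eq.
Qed.

Lemma rho_valley d e q : Gamma d -> Gamma q -> child e d -> child e q ->
  (q = d /\ rho [d; e; q] [d]) \/
  (q = e /\ rho [d; e; q] [d; e]) \/
  (child d q /\ rho [d; e; q] [d; q]) \/
  (exists p, Gamma p /\ child d p /\ child q p /\ rho [d; e; q] [d; p; q]).
Proof.
  intros Gd Gq Hed Heq.
  destruct (classic (q = d)) as [-> | Hqd].
  { left; split; auto using rho_child_sandwich. }
  destruct (classic (q = G1)) as [-> | Hq1].
  { rewrite (child_G1 Heq); right; left; split; [reflexivity |].
    apply (rho_ctx [d] [] (rho_idem Gamma_G1)); Forall_Gamma. }
  destruct (classic (d = G1)) as [-> | Hd1].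
  { rewrite (child_G1 Hed) in Heq |- *; right; right; left; split; [exact Heq |].
    apply (rho_ctx [] [q] (rho_idem Gamma_G1)); Forall_Gamma. }
  right; right; right; exists (Gt q e d).
  assert (Gp : Gamma (Gt q e d)) by now apply Gamma_apex.
  split; [exact Gp | split; [right | split; [left | apply rho_insert_apex]]]; auto.
Qed.

Lemma peak_word_snoc_parent L q : is_peak_word L -> Gamma q -> child (last L G1) q ->
  exists L', is_peak_word L' /\ last L' G1 = q /\ rho (L ++ [q]) L'.
Proof.
  intros (P & a & b & GP & Ha & Hb & ->); revert q Hb.
  induction b as [|e b IH] using rev_ind; intros q Hb Gq Hq; rewrite last_peak_word in Hq.
  - change (peak_word P a [] ++ [q]) with (peak_word q (P :: a) []).
    assert (Ha' : descent q (P :: a)) by now constructor.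
    exists (peak_word q (P :: a) []); split; [| split; [apply last_peak_word |]].
    + exists q, (P :: a), []; repeat split; auto; constructor.
    + apply rho_refl, peak_word_isWord; auto; constructor.
  - apply descent_app_iff in Hb as [Hb Hde]; inversion_clear Hde as [| ? ? ? Gd Hed _].
    rewrite app_comm_cons, last_last in Hq.
    set (W := peak_word P a b) in IH.
    assert (HW : is_peak_word W) by (exists P, a, b; auto).
    pose proof (is_peak_word_isWord HW) as Hw.
    assert (HlW : last W G1 = last (P :: b) G1) by apply last_peak_word.
    rewrite HlW in IH; set (d := last (P :: b) G1) in *.
    assert (Hctx : forall v, rho [d; e; q] (d :: v) -> rho (W ++ [e; q]) (W ++ v)).
    { intro v; rewrite <- HlW; exact (rho_ctx_last Hw). }
    replace (peak_word P a (b ++ [e]) ++ [q]) with (W ++ [e; q])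
      by (unfold W, peak_word; list_eq).
    destruct (rho_valley Gd Gq Hed Hq)
      as [[-> H] | [[-> H] | [[Hdq H] | (p & Gp & Hdp & Hqp & H)]]].
    + exists W; split; [exact HW | split; [exact HlW |]].
      rewrite <- (app_nil_r W) at 2; exact (Hctx [] H).
    + exists (W ++ [e]); split; [| split; [apply last_last | exact (Hctx [e] H)]].
      apply is_peak_word_app_descent; [exact HW |].
      rewrite HlW; constructor; auto; constructor.
    + destruct (IH q Hb Gq Hdq) as (L' & HL' & HlL' & Hr).
      exists L'; split; [exact HL' | split; [exact HlL' |]].
      exact (rho_trans (Hctx [q] H) Hr).
    + destruct (IH p Hb Gp Hdp) as (L1 & HL1 & HlL1 & Hr).
      exists (L1 ++ [q]); split; [| split; [apply last_last |]].
      * apply is_peak_word_app_descent; [exact HL1 |].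
        rewrite HlL1; constructor; auto; constructor.
      * apply (rho_trans (Hctx [p; q] H)).
        replace (W ++ [p; q]) with ((W ++ [p]) ++ [q]) by list_eq.
        now apply rho_snoc.
Qed.

Lemma isWord_last_Gamma L : isWord L -> Gamma (last L G1).
Proof.
  intros [HL FL]; rewrite (app_removelast_last G1 HL), last_last in *.
  now apply Forall_app in FL as [_ FL]; inversion FL.
Qed.

Lemma descent_right_to_G1 h : Gamma h ->
  exists b, descent h b /\ last (h :: b) G1 = G1 /\ rho (h :: b) [h].
Proof.
  intros [i Hh]; induction Hh as [| x | i l c r Hl _ Hc IHc Hr _ Hlr Hcl Hcr].
  - exists []; split; [constructor | split; [reflexivity |]].
    apply rho_refl; split; [discriminate | Forall_Gamma].
  - exists [G1]; split; [repeat constructor; auto | split; [reflexivity |]].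
    exact (rho_1r (Gamma_Gx x)).
  - assert (Gp : Gamma (Gt l c r)) by (eexists; econstructor; eauto).
    destruct (Gamma_triple_parts Gp) as (Gl & Gc & Gr).
    destruct IHc as (b & Hb & Hlast & Hrho).
    pose proof (descent_Forall_Gamma Gc Hb).
    exists (r :: c :: b); split; [| split; [exact Hlast |]].
    { apply descent_cons; [exact Gp | now right | now apply descent_cons]. }
    rho_rw [Gt l c r; r] [] Hrho.
    exact (rho_triple_rc Gp).
Qed.

Lemma descent_left_to_G1 h : Gamma h ->
  exists b, descent h b /\ last (h :: b) G1 = G1 /\ rho (rev b ++ [h]) [h].
Proof.
  intros [i Hh]; induction Hh as [| x | i l c r Hl _ Hc IHc Hr _ Hlr Hcl Hcr].
  - exists []; split; [constructor | split; [reflexivity |]].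
    apply rho_refl; split; [discriminate | Forall_Gamma].
  - exists [G1]; split; [repeat constructor; auto | split; [reflexivity |]].
    exact (rho_1l (Gamma_Gx x)).
  - assert (Gp : Gamma (Gt l c r)) by (eexists; econstructor; eauto).
    destruct (Gamma_triple_parts Gp) as (Gl & Gc & Gr).
    destruct IHc as (b & Hb & Hlast & Hrho).
    pose proof (descent_Forall_Gamma Gc Hb).
    exists (l :: c :: b); split; [| split; [exact Hlast |]].
    { apply descent_cons; [exact Gp | now left | now apply descent_cons]. }
    rho_rw [] [l; Gt l c r] Hrho.
    exact (rho_triple_cl Gp).
Qed.

Lemma peak_word_ascend h b L : descent h b -> is_peak_word L ->
  last L G1 = last (h :: b) G1 ->
  exists L', is_peak_word L' /\ last L' G1 = h /\ rho (L ++ rev b ++ [h]) L'.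
Proof.
  intros Hb; revert L; induction Hb as [p | p q b Gp Hq Hb IH]; intros L HL Hlast.
  - pose proof (is_peak_word_isWord HL) as Hw.
    pose proof (isWord_last_Gamma Hw) as Gm; simpl in Hlast; rewrite Hlast in Gm.
    exists L; split; [exact HL | split; [exact Hlast |]].
    pose proof (rho_ctx_last (u := [p]) (v := []) Hw) as H.
    rewrite app_nil_r, Hlast in H; exact (H (rho_idem Gm)).
  - destruct (IH L HL Hlast) as (L1 & HL1 & HlL1 & Hr1).
    destruct (peak_word_snoc_parent HL1 Gp) as (L' & HL' & HlL' & Hr').
    { now rewrite HlL1. }
    exists L'; split; [exact HL' | split; [exact HlL' |]].
    apply (rho_trans (v := L1 ++ [p])); [| exact Hr'].
    replace (L ++ rev (q :: b) ++ [p]) with ((L ++ rev b ++ [q]) ++ [p]) by list_eq.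
    now apply rho_snoc.
Qed.

Lemma peak_word_snoc L h : is_peak_word L -> Gamma h ->
  exists L', is_peak_word L' /\ rho (L ++ [h]) L'.
Proof.
  intros HL Gh.
  pose proof (is_peak_word_isWord HL) as Hw.
  destruct (descent_right_to_G1 (isWord_last_Gamma Hw)) as (bL & HbL & HlL & HrL).
  destruct (descent_left_to_G1 Gh) as (bh & Hbh & Hlh & Hrh).
  assert (HL0 : is_peak_word (L ++ bL)) by now apply is_peak_word_app_descent.
  destruct (peak_word_ascend Hbh HL0) as (L' & HL' & _ & Hr).
  { now rewrite last_app_last, HlL, Hlh. }
  exists L'; split; [exact HL' |].
  apply (rho_trans (v := (L ++ bL) ++ rev bh ++ [h])); [| exact Hr].
  apply rho_app; apply rho_sym; [| exact Hrh].
  rewrite <- (app_nil_r L) at 2; exact (rho_ctx_last Hw HrL).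
Qed.

Lemma rho_peak_word u : isWord u -> exists L, is_peak_word L /\ rho u L.
Proof.
  intros [Hne Fu]; induction u as [|h u IH] using rev_ind; [congruence |].
  apply Forall_app in Fu as [Fu Fh]; inversion_clear Fh as [| ? ? Gh _].
  destruct u as [|g u].
  - exists (peak_word h [] []); split; [exists h, [], []; repeat split; auto; constructor |].
    apply rho_refl; split; [discriminate | Forall_Gamma].
  - destruct IH as (L & HL & Hr); [discriminate | exact Fu |].
    destruct (peak_word_snoc HL Gh) as (L' & HL' & Hr').
    exists L'; split; [exact HL' |].
    apply (rho_trans (v := L ++ [h])); [| exact Hr'].
    now apply rho_snoc.
Qed.

Lemma inverse_word_rho u u' v : rho u u' -> inverse_word u' v -> inverse_word u v.
Proof.
  intros H (_ & Hv & Hu'vu' & Hvu'v).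
  assert (Hvv : rho v v) by now apply rho_refl.
  split; [exact (proj1 (rho_isWord H)) | split; [exact Hv | split]].
  - apply (rho_trans (v := u' ++ v ++ u')); [| exact (rho_trans Hu'vu' (rho_sym H))].
    apply rho_app; [exact H | apply rho_app; [exact Hvv | exact H]].
  - apply (rho_trans (v := v ++ u' ++ v)); [| exact Hvu'v].
    apply rho_app; [exact Hvv | apply rho_app; [exact H | exact Hvv]].
Qed.

Lemma isWord_regular u : isWord u -> exists v, inverse_word u v.
Proof.
  intros Hu; destruct (rho_peak_word Hu) as (L & (P & a & b & GP & Ha & Hb & ->) & Hr).
  exists (peak_word P b a); exact (inverse_word_rho Hr (peak_word_inverse GP Ha Hb)).
Qed.

Lemma descent_rev_firstn gs k : k < length gs -> Forall Gamma gs ->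
  (forall j, 1 <= j <= k -> child (nth (j - 1) gs G1) (nth j gs G1)) ->
  descent (nth k gs G1) (rev (firstn k gs)).
Proof.
  intros Hk F H; induction k as [|k IH]; [constructor |].
  rewrite (firstn_S_nth k gs G1) by lia; rewrite rev_app_distr; simpl.
  apply descent_cons.
  - exact (proj1 (Forall_nth _ _) F (S k) G1 Hk).
  - pose proof (H (S k) ltac:(lia)) as Hc; now replace (S k - 1) with k in Hc by lia.
  - apply IH; [lia | intros j Hj; apply H; lia].
Qed.

Lemma descent_skipn gs k : k < length gs -> Forall Gamma gs ->
  (forall j, k < j < length gs -> child (nth j gs G1) (nth (j - 1) gs G1)) ->
  descent (nth k gs G1) (skipn (S k) gs).
Proof.
  remember (length gs - S k) as m eqn:Hm; revert k Hm.
  induction m as [|m IH]; intros k Hm Hk F H.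
  - rewrite skipn_all2 by lia; constructor.
  - rewrite (skipn_nth_cons (S k) gs G1) by lia.
    apply descent_cons.
    + exact (proj1 (Forall_nth _ _) F k G1 Hk).
    + pose proof (H (S k) ltac:(lia)) as Hc; now replace (S k - 1) with k in Hc by lia.
    + apply IH; [lia | lia | exact F | intros j Hj; apply H; lia].
Qed.

Lemma inverse_word_rev gs k : k < length gs -> Forall Gamma gs ->
  (forall j, 1 <= j <= k -> child (nth (j - 1) gs G1) (nth j gs G1)) ->
  (forall j, k < j < length gs -> child (nth j gs G1) (nth (j - 1) gs G1)) ->
  inverse_word gs (rev gs).
Proof.
  intros Hk F Hup Hdown.
  assert (Egs : gs = peak_word (nth k gs G1) (rev (firstn k gs)) (skipn (S k) gs)).
  { unfold peak_word; rewrite rev_involutive, <- (skipn_nth_cons k gs G1) by exact Hk.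
    symmetry; apply firstn_skipn. }
  rewrite Egs, rev_peak_word.
  apply peak_word_inverse.
  - exact (proj1 (Forall_nth _ _) F k G1 Hk).
  - now apply descent_rev_firstn.
  - now apply descent_skipn.
Qed.

Lemma rho_G1_unit u : isWord u -> rho ([G1] ++ u) u /\ rho (u ++ [G1]) u.
Proof.
  intros [Hne F]; split.
  - destruct u as [|g u]; [congruence |]; inversion_clear F as [| ? ? Gg Fu].
    exact (rho_ctx [] u (rho_1l Gg) (Forall_nil _) Fu).
  - destruct (exists_last Hne) as (u' & g & ->).
    apply Forall_app in F as [Fu Fg]; inversion_clear Fg as [| ? ? Gg _].
    rewrite <- app_assoc; rewrite <- (app_nil_r [g]) at 2.
    exact (rho_ctx u' [] (rho_1r Gg) Fu (Forall_nil _)).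
Qed.

Lemma idempotent_word_singleton g : Gamma g -> idempotent_word [g].
Proof. intro Gg; split; [split; [discriminate | Forall_Gamma] | exact (rho_idem Gg)]. Qed.

Lemma isWord_idempotent_generated u : isWord u ->
  exists es, es <> [] /\ Forall idempotent_word es /\ rho u (concat es).
Proof.
  intros [Hne F]; exists (map (fun g => [g]) u); split; [now destruct u |].
  split.
  - apply Forall_map; exact (Forall_impl _ idempotent_word_singleton F).
  - replace (concat (map (fun g => [g]) u)) with u
      by (clear; induction u as [|g u IH]; simpl; congruence).
    apply rho_refl; split; assumption.
Qed.

End FT1.

Theorem proposition3p6 (X : Type) (Xne : inhabited X) :
  (* FT^1(X) is a monoid with identity [1] *)
  (forall u : list (gterm X), isWord u -> rho ([G1] ++ u) u /\ rho (u ++ [G1]) u) /\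
  (* idempotent generated: every element is a product of idempotents *)
  (forall u : list (gterm X), isWord u ->
     exists es : list (list (gterm X)),
       es <> [] /\ Forall idempotent_word es /\ rho u (concat es)) /\
  (* regular: every element has an inverse *)
  (forall u : list (gterm X), isWord u -> exists v, inverse_word u v) /\
  (* the explicit inverse *)
  (forall (gs : list (gterm X)) (n k : nat),
     Forall Gamma gs -> length gs = S n ->
     0 < k < n ->
     (forall j, 1 <= j <= k ->
        nth (j - 1) gs G1 = gl (nth j gs G1) \/ nth (j - 1) gs G1 = gr (nth j gs G1)) ->
     (forall j, k < j <= n ->
        nth j gs G1 = gl (nth (j - 1) gs G1) \/ nth j gs G1 = gr (nth (j - 1) gs G1)) ->
     inverse_word gs (rev gs)).
Proof.
  split; [exact rho_G1_unit |].
  split; [exact isWord_idempotent_generated |].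
  split; [exact isWord_regular |].
  intros gs n k F Hlen Hk Hup Hdown.
  apply (inverse_word_rev (k := k)); [lia | exact F | exact Hup |].
  intros j Hj; apply Hdown; lia.
Qed.
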